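(* Let $\mathcal H=(M,n,\mathcal R)$ be an MMS, $S$ a closed convex set, $x_0\in S$, and let $0<\Delta'\le\Delta$. Then $g_{\Delta',\Delta}(D_{\Delta'}\cap S)\supseteq D_\Delta\cap S$.
   Context: An MMS is a tuple $\mathcal H=(M,n,\mathcal R)$ with $M$ a finite nonempty set of modes and $\mathcal R(m)\subseteq\mathbb R^n$ finite nonempty for each mode; let $R=\bigcup_{m\in M}\mathcal R(m)$. For $\Delta>0$ let $D_\Delta=\{x_0+\Delta\sum_{r\in R}i_r r: i_r\in\mathbb N\}$. For $\Delta,\Delta'>0$ the map $g_{\Delta',\Delta}:D_{\Delta'}\to D_\Delta$ sends $x_0+\Delta'\sum_{r\in R}i_r r$ to $x_0+\Delta\sum_{r\in R}i_r r$ (this is well defined and bijective, independent of the chosen coefficients $i_r$). *)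

From Stdlib Require Import Reals List.
From Stdlib Require Fin.
Import ListNotations.
Open Scope R_scope.

Definition vec (n : nat) := Fin.t n -> R.

Definition vzero {n} : vec n := fun _ => 0.
Definition vadd {n} (x y : vec n) : vec n := fun j => x j + y j.
Definition vscale {n} (a : R) (x : vec n) : vec n := fun j => a * x j.
Definition vsum {n} (l : list (vec n)) : vec n := fold_right vadd vzero l.

Record MMS (n : nat) := {
  mode : Type;
  modes_finite : exists l : list mode, forall m, In m l;
  modes_nonempty : inhabited mode;
  rates : mode -> vec n -> Prop;
  rates_finite : forall m, exists l : list (vec n), forall v, rates m v <-> In v l;
  rates_nonempty : forall m, exists v, rates m v
}.
Arguments rates {n} _ _ _.

Definition allRates {n} (H : MMS n) (v : vec n) : Prop := exists m, rates H m v.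

Definition enumR {n} (H : MMS n) (l : list (vec n)) : Prop :=
  NoDup l /\ forall v, allRates H v <-> In v l.

Definition latpt {n} (x0 : vec n) (Delta : R) (l : list (vec n)) (i : vec n -> nat) : vec n :=
  vadd x0 (vscale Delta (vsum (map (fun r => vscale (INR (i r)) r) l))).

Definition D {n} (H : MMS n) (x0 : vec n) (Delta : R) (x : vec n) : Prop :=
  exists l, enumR H l /\ exists i : vec n -> nat, x = latpt x0 Delta l i.

Definition g_graph {n} (H : MMS n) (x0 : vec n) (Delta' Delta : R) (x y : vec n) : Prop :=
  exists l, enumR H l /\ exists i : vec n -> nat,
    x = latpt x0 Delta' l i /\ y = latpt x0 Delta l i.

Definition convex {n} (S : vec n -> Prop) : Prop :=
  forall x y t, S x -> S y -> 0 <= t <= 1 -> S (vadd (vscale t x) (vscale (1 - t) y)).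

(* closed in the Euclidean topology of R^n (sequential, componentwise limits) *)
Definition closed {n} (S : vec n -> Prop) : Prop :=
  forall (u : nat -> vec n) (x : vec n),
    (forall k, S (u k)) -> (forall j, Un_cv (fun k => u k j) (x j)) -> S x.

From Stdlib Require Import Reals List Lra FunctionalExtensionality.
Open Scope R_scope.

(* Write y = x0 + Delta * v with v = sum_r i_r r.  The point
   x = g^{-1}(y) = x0 + Delta' * v is then the convex combination
     x = t * y + (1 - t) * x0,   t = Delta' / Delta in (0, 1],
   because scaling the step of a lattice point by t moves it along the
   segment from x0.  Since x0 and y lie in the convex set S, so does x. *)

Lemma latpt_scale {n} (x0 : vec n) (t Delta : R) (l : list (vec n))
  (i : vec n -> nat) :
  latpt x0 (t * Delta) l i =
  vadd (vscale t (latpt x0 Delta l i)) (vscale (1 - t) x0).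
Proof.
  apply functional_extensionality; intro j.
  unfold latpt, vadd, vscale; ring.
Qed.

Lemma latpt_in_D {n} (H : MMS n) (x0 : vec n) (Delta : R)
  (l : list (vec n)) (i : vec n -> nat) :
  enumR H l -> D H x0 Delta (latpt x0 Delta l i).
Proof. intros He; exists l; split; [exact He | exists i; reflexivity]. Qed.

Lemma latpt_in_g_graph {n} (H : MMS n) (x0 : vec n) (Delta' Delta : R)
  (l : list (vec n)) (i : vec n -> nat) :
  enumR H l ->
  g_graph H x0 Delta' Delta (latpt x0 Delta' l i) (latpt x0 Delta l i).
Proof. intros He; exists l; split; [exact He | exists i; split; reflexivity]. Qed.

Lemma ratio_in_unit_interval (a b : R) :
  0 < a -> a <= b -> 0 <= a / b <= 1.
Proof.
  intros Ha Hab; split.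
  - apply Rlt_le, Rdiv_lt_0_compat; lra.
  - apply (Rmult_le_reg_r b); [lra |].
    unfold Rdiv; rewrite Rmult_assoc, Rinv_l; lra.
Qed.

Theorem lemma5 (n : nat) (H : MMS n) (S : vec n -> Prop) (x0 : vec n)
  (Delta Delta' : R) :
  convex S -> closed S -> S x0 -> 0 < Delta' -> Delta' <= Delta ->
  forall y, D H x0 Delta y -> S y ->
    exists x, (D H x0 Delta' x /\ S x) /\ g_graph H x0 Delta' Delta x y.
Proof.
  intros Hconv _ Sx0 HDelta' Hle y [l [He [i ->]]] Sy.
  exists (latpt x0 Delta' l i).
  assert (Hstep : Delta' = Delta' / Delta * Delta) by (field; lra).
  split; [split |].
  - apply latpt_in_D; exact He.
  - rewrite Hstep, latpt_scale.
    apply Hconv; [exact Sy | exact Sx0 | apply ratio_in_unit_interval; lra].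
  - apply latpt_in_g_graph; exact He.
Qed.
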